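(* For $X_d=\otimes_{j=1}^d X_{1,j}$, the following are equivalent: (i) $\lim_{d\to\infty}n^{X_d}(\varepsilon)=\infty$ for every $\varepsilon\in(0,1)$; (ii) $\displaystyle\sum_{j=1}^\infty\sum_{k=2}^\infty\frac{\lambda^{X_{1,j}}_k}{\lambda^{X_{1,j}}_1}=\infty$.
   Context: For a centered Hilbert-space random element $Z$ with finite second moment, $\lambda^Z_1\ge\lambda^Z_2\ge\dots\ge 0$ denote the eigenvalues of its covariance operator $K^Z$ listed with multiplicity (padded with zeros if there are finitely many), $\Lambda^Z=\sum_k\lambda^Z_k$, $\bar\lambda^Z_k=\lambda^Z_k/\Lambda^Z$. Let $H_{1,j}$, $j\in\mathbb N$, be separable Hilbert spaces and $X_{1,j}$ centered $H_{1,j}$-valued random elements with $\mathbb E\|X_{1,j}\|^2<\infty$ and $\lambda^{X_{1,j}}_1>0$. $X_d=\otimes_{j=1}^dX_{1,j}$ means: $X_d$ is a centered random element of the Hilbert tensor product $H_d=\otimes_{j=1}^dH_{1,j}$ with covariance operator $K^{X_d}=\otimes_{j=1}^dK^{X_{1,j}}$; so the eigenvalues of $K^{X_d}$ are the products $\prod_{j=1}^d\lambda^{X_{1,j}}_{k_j}$, $(k_1,\dots,k_d)\in\mathbb N^d$, and $\Lambda^{X_d}=\prod_j\Lambda^{X_{1,j}}$. The average case approximation complexity is $n^{X_d}(\varepsilon)=\min\{n\in\mathbb N: e^{X_d}(n)\le\varepsilon e^{X_d}(0)\}$, where $e^{X_d}(0)=(\mathbb E\|X_d\|^2)^{1/2}$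 and $e^{X_d}(n)$ is the infimum of $(\mathbb E\|X_d-\sum_{m=1}^n l_m(X_d)\psi_m\|^2)^{1/2}$ over $\psi_m\in H_d$, $l_m\in H_d^*$; equivalently $n^{X_d}(\varepsilon)=\min\{n:\sum_{k>n}\bar\lambda^{X_d}_k\le\varepsilon^2\}$. *)

From Stdlib Require Import Reals List.
Open Scope R_scope.

(* Covariance eigenvalues of the factors X_{1,j} are given by
   [lam j k] = lambda^{X_{1,j}}_{k+1}  (both j and k are 0-indexed). *)

(* Eigenvalue of K^{X_d} indexed by the multi-index [m] (a list of length d):
   prod_{j < length m} lam j (nth j m). *)
Fixpoint tprod (lam : nat -> nat -> R) (j : nat) (m : list nat) : R :=
  match m with
  | nil => 1
  | a :: m' => lam j a * tprod lam (S j) m'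
  end.

Definition tensor_eig (lam : nat -> nat -> R) (m : list nat) : R := tprod lam 0 m.

(* [mu] is the sequence (0-indexed) of eigenvalues of K^{X_d}, i.e. of the products
   prod_{j<d} lam j (k_j), listed with multiplicity in nonincreasing order and padded
   with zeros if there are finitely many nonzero ones. *)
Definition is_tensor_eig_enum (lam : nat -> nat -> R) (d : nat) (mu : nat -> R) : Prop :=
  (forall k, 0 <= mu k) /\
  (forall k, mu (S k) <= mu k) /\
  exists sigma : nat -> list nat,
    (forall k, 0 < mu k -> length (sigma k) = d /\ tensor_eig lam (sigma k) = mu k) /\
    (forall k k', 0 < mu k -> 0 < mu k' -> sigma k = sigma k' -> k = k') /\
    (forall m, length m = d -> 0 < tensor_eig lam m ->
       exists k, 0 < mu k /\ sigma k = m).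

(* sum_{k > n} (normalized eigenvalue)_k <= eps^2, with normalization by
   Lambda = sum_k mu_k (here [n] counts the number of discarded leading eigenvalues). *)
Definition tail_le (mu : nat -> R) (n : nat) (eps : R) : Prop :=
  exists L l, infinite_sum mu L /\ infinite_sum (fun i => mu (n + i)%nat) l /\
              l / L <= eps ^ 2.

Definition is_complexity (mu : nat -> R) (eps : R) (n : nat) : Prop :=
  tail_le mu n eps /\ (forall m, (m < n)%nat -> ~ tail_le mu m eps).

From Stdlib Require Import Reals List Lra Lia Classical.
From Coquelicot Require Import Coquelicot.
Open Scope R_scope.

(* Write r_j for the sum of lam j (k+1) / lam j 0 over k.  The eigenvalues of
   X_d sum to prod_{j<d} lam j 0 (1 + r_j) (summing the tensor products over the
   cubes {0..K-1}^d and letting K grow), and the largest of them is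
   prod_{j<d} lam j 0.  Hence the normalized eigenvalues are nonincreasing with
   largest one 1/Q_d, where Q_d = prod_{j<d} (1 + r_j), so keeping only the n
   largest of them leaves a tail of mass at least 1 - n/Q_d: n(eps) >= (1 - eps^2) Q_d
   >= (1 - eps^2) (1 + sum_{j<d} r_j), which diverges with the series.
   Conversely, if sum_j r_j <= B then Q_d <= e^B for all d, and for
   eps^2 >= 1 - e^(-B) a single eigenvalue suffices: n(eps) = 1 for every d. *)

Definition Rsum (l : list R) : R := fold_right Rplus 0 l.

Lemma Rsum_app l1 l2 : Rsum (l1 ++ l2) = Rsum l1 + Rsum l2.
Proof. induction l1 as [|x l1 IH]; simpl; [ring | rewrite IH; ring]. Qed.

Lemma Rsum_map_seq_S f n :
  Rsum (map f (seq 0 (S n))) = Rsum (map f (seq 0 n)) + f n.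
Proof. rewrite seq_S, map_app, Rsum_app. simpl. ring. Qed.

Lemma Rsum_map_seq f n : Rsum (map f (seq 0 (S n))) = sum_f_R0 f n.
Proof.
  induction n as [|n IH]; [simpl; ring|].
  rewrite Rsum_map_seq_S, IH. reflexivity.
Qed.

Lemma Rsum_map_nonneg {A} (f : A -> R) l :
  (forall x, In x l -> 0 <= f x) -> 0 <= Rsum (map f l).
Proof.
  induction l as [|x l IH]; simpl; intros H; [lra|].
  pose proof (H x (or_introl eq_refl)).
  pose proof (IH (fun y Hy => H y (or_intror Hy))). lra.
Qed.

Lemma Rsum_map_scal {A} (f : A -> R) c l :
  Rsum (map (fun x => c * f x) l) = c * Rsum (map f l).
Proof. induction l as [|x l IH]; simpl; [ring | rewrite IH; ring]. Qed.

Lemma Rsum_map_flat_map {A B} (g : B -> R) (h : A -> list B) s :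
  Rsum (map g (flat_map h s)) = Rsum (map (fun a => Rsum (map g (h a))) s).
Proof.
  induction s as [|a s IH]; simpl; [reflexivity|].
  rewrite map_app, Rsum_app, IH. reflexivity.
Qed.

Lemma Rsum_map_filter_pos {A} (f : A -> R) l :
  (forall x, In x l -> 0 <= f x) ->
  Rsum (map f l) = Rsum (map f (filter (fun x => if Rlt_dec 0 (f x) then true else false) l)).
Proof.
  induction l as [|x l IH]; simpl; intros H; [reflexivity|].
  rewrite IH by auto.
  destruct (Rlt_dec 0 (f x)) as [P|P]; [reflexivity|].
  assert (f x = 0) as -> by (pose proof (H x (or_introl eq_refl)); lra).
  simpl; ring.
Qed.

Lemma Rsum_map_incl {A} (f : A -> R) l1 : forall l2,
  (forall x, In x l2 -> 0 <= f x) -> NoDup l1 -> incl l1 l2 ->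
  Rsum (map f l1) <= Rsum (map f l2).
Proof.
  induction l1 as [|a l1 IH]; intros l2 Hf Hnd Hincl; simpl.
  - apply Rsum_map_nonneg; auto.
  - inversion Hnd as [|? ? Ha Hnd1]; subst.
    destruct (in_split a l2 (Hincl a (or_introl eq_refl))) as [x [y ->]].
    assert (Rsum (map f l1) <= Rsum (map f (x ++ y))).
    { apply IH; auto.
      - intros z Hz. apply Hf. rewrite in_app_iff in *. simpl. tauto.
      - intros z Hz. pose proof (Hincl z (or_intror Hz)) as Hz'.
        rewrite in_app_iff in *. destruct Hz' as [|[<-|]]; tauto. }
    rewrite !map_app, !Rsum_app in *. simpl. lra.
Qed.

Lemma Rsum_map_reindex {A B} (g : A -> R) (f : B -> R) (h : B -> A) lx :
  NoDup lx -> (forall x, In x lx -> 0 <= g x) ->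
  (forall x, In x lx -> 0 < g x -> exists y, h y = x /\ f y = g x) ->
  exists ly, NoDup ly /\ Rsum (map g lx) = Rsum (map f ly).
Proof.
  intros Hnd Hg Hpre.
  enough (exists ly, NoDup ly /\ (forall y, In y ly -> In (h y) lx) /\
                     Rsum (map g lx) = Rsum (map f ly)) as (ly & ? & _ & ?) by eauto.
  induction lx as [|x lx IH]; simpl in *.
  - exists nil. repeat split; [constructor | tauto].
  - inversion Hnd as [|? ? Hx Hnd1]; subst.
    destruct IH as (ly & Hly & Hin & Hsum); auto.
    destruct (Rlt_dec 0 (g x)) as [P|P].
    + destruct (Hpre x (or_introl eq_refl) P) as (y & Hy & Hfy).
      exists (y :: ly). repeat split.
      * constructor; auto. intros Hy'. apply Hx. rewrite <- Hy. auto.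
      * intros y' [<-|Hy']; auto.
      * simpl. rewrite Hsum, Hfy. reflexivity.
    + exists ly. repeat split; auto.
      assert (g x = 0) as -> by (pose proof (Hg x (or_introl eq_refl)); lra).
      rewrite Hsum. ring.
Qed.

Lemma Rsum_map_seq_le_head (u : nat -> R) n :
  (forall k, u (S k) <= u k) -> Rsum (map u (seq 0 n)) <= INR n * u O.
Proof.
  intros Hdecr.
  assert (Hle : forall k, u k <= u O).
  { induction k; [lra|]. pose proof (Hdecr k). lra. }
  induction n as [|n IH]; [simpl; lra|].
  rewrite Rsum_map_seq_S, S_INR. pose proof (Hle n). lra.
Qed.

Lemma le_list_max l k : In k l -> (k <= list_max l)%nat.
Proof.
  intros Hk. assert (H : List.Forall (fun b => b <= list_max l)%nat l) by (apply list_max_le; lia).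
  rewrite List.Forall_forall in H. auto.
Qed.

Lemma Un_cv_const c : Un_cv (fun _ => c) c.
Proof. intros e He. exists O. intros. rewrite R_dist_eq. exact He. Qed.

Lemma Un_cv_le_bound u l B : Un_cv u l -> (forall n, u n <= B) -> l <= B.
Proof. intros Hu HB. eapply Rle_cv_lim; [exact HB | exact Hu | apply Un_cv_const]. Qed.

Lemma sum_f_R0_growing (a : nat -> R) : (forall k, 0 <= a k) -> Un_growing (sum_f_R0 a).
Proof. intros Ha k. simpl. pose proof (Ha (S k)). lra. Qed.

Lemma Rsum_map_seq_le_series (a : nat -> R) L n :
  (forall k, 0 <= a k) -> infinite_sum a L -> Rsum (map a (seq 0 n)) <= L.
Proof.
  intros Ha HL. pose proof (growing_ineq _ _ (sum_f_R0_growing a Ha) HL) as Hle.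
  destruct n as [|n].
  - pose proof (Hle O). pose proof (Ha O). simpl in *. lra.
  - rewrite Rsum_map_seq. apply Hle.
Qed.

Lemma series_tail (a : nat -> R) L n : infinite_sum a L ->
  infinite_sum (fun i => a (n + i)%nat) (L - Rsum (map a (seq 0 n))).
Proof.
  intros HL. destruct n as [|n].
  - simpl. rewrite Rminus_0_r. exact HL.
  - apply is_series_Reals, is_series_incr_n; [lia|].
    rewrite sum_n_Reals. simpl pred. rewrite <- Rsum_map_seq.
    replace (plus _ _) with L by (unfold plus; simpl; ring).
    now apply is_series_Reals.
Qed.

Lemma series_shift_iff (a : nat -> R) L :
  infinite_sum a L <-> infinite_sum (fun k => a (S k)) (L - a O).
Proof.
  split; intros H.
  - pose proof (series_tail a L 1 H) as H1. simpl in H1.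
    now rewrite Rplus_0_r in H1.
  - apply is_series_Reals, is_series_decr_1.
    replace (plus _ _) with (L - a O) by (unfold plus, opp; simpl; ring).
    now apply is_series_Reals.
Qed.

Lemma series_scal_iff (a : nat -> R) l c : c <> 0 ->
  infinite_sum a l <-> infinite_sum (fun k => a k / c) (l / c).
Proof.
  intros Hc. split; intros H; apply is_series_Reals in H; apply is_series_Reals.
  - exact (is_series_scal_r (/ c) _ _ H).
  - apply (is_series_scal_r c) in H.
    replace l with (l / c * c) by (field; exact Hc).
    eapply is_series_ext; [|exact H]. intros k. simpl. field. exact Hc.
Qed.

Lemma series_normalized_iff (b : nat -> R) L : 0 < b O ->
  infinite_sum b L <-> infinite_sum (fun k => b (S k) / b O) ((L - b O) / b O).
Proof.
  intros Hb. rewrite series_shift_iff.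
  apply (series_scal_iff (fun k => b (S k))). lra.
Qed.

Fixpoint prod_from (f : nat -> R) (j d : nat) : R :=
  match d with O => 1 | S d' => f j * prod_from f (S j) d' end.

Lemma prod_from_nonneg f j d : (forall i, 0 <= f i) -> 0 <= prod_from f j d.
Proof. revert j; induction d; intros j H; simpl; [lra | apply Rmult_le_pos; auto]. Qed.

Lemma prod_from_pos f j d : (forall i, 0 < f i) -> 0 < prod_from f j d.
Proof. revert j; induction d; intros j H; simpl; [lra | apply Rmult_lt_0_compat; auto]. Qed.

Lemma prod_from_le f g j d :
  (forall i, 0 <= f i <= g i) -> prod_from f j d <= prod_from g j d.
Proof.
  revert j; induction d; intros j H; simpl; [lra|].
  apply Rmult_le_compat; try apply H; auto.
  apply prod_from_nonneg. apply H.
Qed.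

Lemma prod_from_mult f g j d :
  prod_from (fun i => f i * g i) j d = prod_from f j d * prod_from g j d.
Proof. revert j; induction d; intros j; simpl; [ring | rewrite IHd; ring]. Qed.

Lemma prod_from_S_last f j d : prod_from f j (S d) = prod_from f j d * f (j + d)%nat.
Proof.
  revert j; induction d; intros j.
  - simpl. rewrite Nat.add_0_r. ring.
  - change (prod_from f j (S (S d))) with (f j * prod_from f (S j) (S d)).
    rewrite IHd. replace (S j + d)%nat with (j + S d)%nat by lia. simpl. ring.
Qed.

Lemma prod_from_cv (u : nat -> nat -> R) l j d :
  (forall i, Un_cv (fun K => u K i) (l i)) ->
  Un_cv (fun K => prod_from (u K) j d) (prod_from l j d).
Proof.
  revert j; induction d; intros j H; simpl.
  - apply Un_cv_const.
  - exact (CV_mult _ _ _ _ (H j) (IHd (S j) H)).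
Qed.

Lemma prod_one_plus_ge_sum r n : (forall i, 0 <= r i) ->
  1 + sum_f_R0 r n <= prod_from (fun i => 1 + r i) 0 (S n).
Proof.
  intros Hr. induction n as [|n IH]; [simpl; lra|].
  rewrite prod_from_S_last. simpl sum_f_R0. change (0 + S n)%nat with (S n).
  pose proof (Hr (S n)). pose proof (cond_pos_sum r n Hr).
  set (P := prod_from _ 0 (S n)) in *. nra.
Qed.

Lemma prod_one_plus_le_exp r n : (forall i, 0 <= r i) ->
  prod_from (fun i => 1 + r i) 0 (S n) <= exp (sum_f_R0 r n).
Proof.
  intros Hr. induction n as [|n IH].
  - simpl. rewrite Rmult_1_r. apply exp_ineq1_le.
  - rewrite prod_from_S_last. simpl sum_f_R0. rewrite exp_plus.
    apply Rmult_le_compat; auto.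
    + apply prod_from_nonneg. intros i. pose proof (Hr i). lra.
    + pose proof (Hr (S n)). simpl. lra.
    + apply exp_ineq1_le.
Qed.

Fixpoint box (d K : nat) : list (list nat) :=
  match d with
  | O => nil :: nil
  | S d' => flat_map (fun a => map (cons a) (box d' K)) (seq 0 K)
  end.

Lemma in_box d K m :
  In m (box d K) <-> length m = d /\ List.Forall (fun a => (a < K)%nat) m.
Proof.
  revert m; induction d; intros m; simpl.
  - split; [intros [<-|[]]; auto|].
    intros [H _]. destruct m; [auto | discriminate].
  - rewrite in_flat_map. split.
    + intros (a & Ha & Hm). apply in_map_iff in Hm as (m' & <- & Hm').
      apply IHd in Hm' as [? ?]. apply in_seq in Ha. simpl.
      split; [congruence | constructor; auto; lia].
    + intros [Hl HF]. destruct m as [|a m']; [discriminate|].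
      inversion HF; subst. exists a. split; [apply in_seq; lia|].
      apply in_map, IHd. auto.
Qed.

Lemma NoDup_box d K : NoDup (box d K).
Proof.
  induction d as [|d IH]; simpl; [repeat constructor; auto|].
  pose proof (seq_NoDup K 0) as Hs. induction (seq 0 K) as [|a s IHs]; simpl; [constructor|].
  inversion Hs; subst. apply NoDup_app; auto.
  - apply NoDup_map_NoDup_ForallPairs; auto. intros x y _ _ E. injection E; auto.
  - intros x Hx Hx'. apply in_map_iff in Hx as (m & <- & _).
    apply in_flat_map in Hx' as (b & Hb & Hm). apply in_map_iff in Hm as (m' & E & _).
    injection E; intros; subst. contradiction.
Qed.

Lemma Rsum_tprod_box lam d K j :
  Rsum (map (tprod lam j) (box d K)) = prod_from (fun i => Rsum (map (lam i) (seq 0 K))) j d.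
Proof.
  revert j; induction d; intros j; simpl; [ring|].
  rewrite Rsum_map_flat_map, (Rmult_comm (Rsum _)), <- Rsum_map_scal.
  f_equal. apply map_ext. intros a. rewrite map_map. simpl. rewrite Rsum_map_scal, IHd. ring.
Qed.

Section TensorSpectrum.

Variable lam : nat -> nat -> R.
Hypothesis lam_nonneg : forall j k, 0 <= lam j k.
Hypothesis lam_decr : forall j k, lam j (S k) <= lam j k.
Hypothesis lam_head_pos : forall j, 0 < lam j O.

Lemma lam_le_head j k : lam j k <= lam j O.
Proof. induction k; [lra|]. pose proof (lam_decr j k). lra. Qed.

Lemma tprod_nonneg m j : 0 <= tprod lam j m.
Proof. revert j; induction m; intros j; simpl; [lra | apply Rmult_le_pos; auto]. Qed.

Lemma tprod_le_head m j : tprod lam j m <= prod_from (fun i => lam i O) j (length m).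
Proof.
  revert j; induction m; intros j; simpl; [lra|].
  apply Rmult_le_compat; auto using tprod_nonneg, lam_le_head.
Qed.

Lemma tprod_repeat_0 d j : tprod lam j (repeat O d) = prod_from (fun i => lam i O) j d.
Proof. revert j; induction d; intros j; simpl; [reflexivity | now rewrite IHd]. Qed.

Variable d : nat.
Variable mu : nat -> R.
Hypothesis mu_enum : is_tensor_eig_enum lam d mu.

Lemma mu_nonneg k : 0 <= mu k.
Proof. apply mu_enum. Qed.

Lemma mu_decr k : mu (S k) <= mu k.
Proof. apply mu_enum. Qed.

Lemma mu_le_head k : mu k <= mu O.
Proof. induction k; [lra|]. pose proof (mu_decr k). lra. Qed.

Lemma mu_head : mu O = prod_from (fun i => lam i O) 0 d.
Proof.
  destruct mu_enum as (_ & _ & sigma & Hsigma & _ & Hsurj).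
  assert (Hprod : 0 < prod_from (fun i => lam i O) 0 d) by (apply prod_from_pos; auto).
  apply Rle_antisym.
  - destruct (Rlt_dec 0 (mu O)) as [P|P]; [|lra].
    destruct (Hsigma O P) as [Hlen <-]. unfold tensor_eig. rewrite <- Hlen.
    apply tprod_le_head.
  - destruct (Hsurj (repeat O d)) as (k & Pk & Ek).
    + apply repeat_length.
    + unfold tensor_eig. now rewrite tprod_repeat_0.
    + destruct (Hsigma k Pk) as [_ He]. rewrite Ek in He. unfold tensor_eig in He.
      rewrite tprod_repeat_0 in He. rewrite He. apply mu_le_head.
Qed.

Variable Lam : nat -> R.
Hypothesis lam_series : forall j, infinite_sum (lam j) (Lam j).

Lemma Rsum_mu_le_prod N : Rsum (map mu (seq 0 N)) <= prod_from Lam 0 d.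
Proof.
  destruct mu_enum as (_ & _ & sigma & Hsigma & Hinj & _).
  set (F := filter (fun k => if Rlt_dec 0 (mu k) then true else false) (seq 0 N)).
  assert (HF : forall k, In k F -> 0 < mu k).
  { intros k Hk. apply filter_In in Hk as [_ Hk]. destruct (Rlt_dec 0 (mu k)); easy. }
  rewrite (Rsum_map_filter_pos mu) by (intros; apply mu_nonneg). fold F.
  replace (map mu F) with (map (tprod lam 0) (map sigma F))
    by (rewrite map_map; apply map_ext_in; intros k Hk; apply (Hsigma k (HF k Hk))).
  set (K := S (list_max (concat (map sigma F)))).
  apply Rle_trans with (Rsum (map (tprod lam 0) (box d K))).
  - apply Rsum_map_incl.
    + intros; apply tprod_nonneg.
    + apply NoDup_map_NoDup_ForallPairs; [|apply NoDup_filter, seq_NoDup].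
      intros x y Hx Hy. apply Hinj; auto.
    + intros m Hm. apply in_map_iff in Hm as (k & <- & Hk). apply in_box.
      split; [apply (Hsigma k (HF k Hk))|].
      apply List.Forall_forall. intros a Ha. unfold K.
      enough (a <= list_max (concat (map sigma F)))%nat by lia.
      apply le_list_max, in_concat. exists (sigma k). auto using in_map.
  - rewrite Rsum_tprod_box. apply prod_from_le. intros i. split.
    + apply Rsum_map_nonneg. auto.
    + apply Rsum_map_seq_le_series; auto.
Qed.

Lemma prod_le_mu_series L : infinite_sum mu L -> prod_from Lam 0 d <= L.
Proof.
  intros HL. destruct mu_enum as (_ & _ & sigma & Hsigma & _ & Hsurj).
  assert (Hbox : forall K, Rsum (map (tprod lam 0) (box d K)) <= L).
  { intros K. destruct (Rsum_map_reindex (tprod lam 0) mu sigma (box d K)) as (lk & Hlk & ->).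
    - apply NoDup_box.
    - intros; apply tprod_nonneg.
    - intros m Hm Pm. apply in_box in Hm as [Hlen _].
      destruct (Hsurj m Hlen Pm) as (k & Pk & Ek). exists k. split; auto.
      destruct (Hsigma k Pk) as [_ He]. rewrite <- He, Ek. reflexivity.
    - set (N := S (list_max lk)).
      apply Rle_trans with (Rsum (map mu (seq 0 N))).
      + apply Rsum_map_incl; auto using mu_nonneg.
        intros k Hk. apply in_seq. pose proof (le_list_max lk k Hk). unfold N. lia.
      + apply Rsum_map_seq_le_series; auto using mu_nonneg. }
  apply (Un_cv_le_bound (fun K => prod_from (fun i => Rsum (map (lam i) (seq 0 K))) 0 d)).
  - apply prod_from_cv. intros i. apply CV_shift with 1%nat.
    eapply Un_cv_ext; [|exact (lam_series i)].
    intros n. rewrite Nat.add_1_r, Rsum_map_seq. reflexivity.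
  - intros K. rewrite <- Rsum_tprod_box. apply Hbox.
Qed.

Lemma mu_series : infinite_sum mu (prod_from Lam 0 d).
Proof.
  destruct (growing_cv (sum_f_R0 mu) (sum_f_R0_growing mu mu_nonneg)) as [L HL].
  { exists (prod_from Lam 0 d). intros x [n ->]. rewrite <- Rsum_map_seq. apply Rsum_mu_le_prod. }
  replace (prod_from Lam 0 d) with L; [exact HL|].
  apply Rle_antisym; [|exact (prod_le_mu_series L HL)].
  apply (Un_cv_le_bound _ _ _ HL).
  intros n. rewrite <- Rsum_map_seq. apply Rsum_mu_le_prod.
Qed.

End TensorSpectrum.

Section Complexity.

Variables (mu : nat -> R) (L : R).
Hypothesis mu_decr : forall k, mu (S k) <= mu k.
Hypothesis mu_series : infinite_sum mu L.
Hypothesis L_pos : 0 < L.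

Lemma tail_le_iff n eps :
  tail_le mu n eps <-> L - Rsum (map mu (seq 0 n)) <= eps ^ 2 * L.
Proof.
  rewrite <- Rle_div_l by lra. split.
  - intros (L' & l & HL' & Hl & Hle).
    rewrite (uniqueness_sum _ _ _ HL' mu_series) in Hle.
    now rewrite (uniqueness_sum _ _ _ Hl (series_tail mu L n mu_series)) in Hle.
  - intros H. exists L, (L - Rsum (map mu (seq 0 n))). auto using series_tail.
Qed.

Lemma complexity_lower_bound eps n :
  is_complexity mu eps n -> (1 - eps ^ 2) * L <= INR n * mu O.
Proof.
  intros [Htail _]. apply tail_le_iff in Htail.
  pose proof (Rsum_map_seq_le_head mu n mu_decr). lra.
Qed.

Lemma complexity_one eps :
  eps ^ 2 < 1 -> (1 - eps ^ 2) * L <= mu O -> is_complexity mu eps 1.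
Proof.
  intros Heps Hhead. split.
  - apply tail_le_iff. simpl. lra.
  - intros m Hm Htail. assert (m = O) as -> by lia.
    apply tail_le_iff in Htail. simpl in Htail. nra.
Qed.

End Complexity.

Definition complexity_unbounded (mu : nat -> nat -> R) : Prop :=
  forall eps, 0 < eps < 1 -> forall M : nat, exists D : nat, forall d n, (D <= d)%nat ->
    is_complexity (mu d) eps n -> (M <= n)%nat.

Section Proposition.

Variable lam : nat -> nat -> R.
Hypothesis lam_nonneg : forall j k, 0 <= lam j k.
Hypothesis lam_decr : forall j k, lam j (S k) <= lam j k.
Hypothesis lam_head_pos : forall j, 0 < lam j O.
Variable mu : nat -> nat -> R.
Hypothesis mu_enum : forall d, is_tensor_eig_enum lam d (mu d).
Variable r : nat -> R.
Hypothesis r_series : forall j, infinite_sum (fun k => lam j (S k) / lam j O) (r j).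

Lemma r_nonneg j : 0 <= r j.
Proof.
  refine (Rsum_map_seq_le_series _ _ 0 _ (r_series j)).
  intros k. apply Rmult_le_pos; [|left; apply Rinv_0_lt_compat]; auto.
Qed.

Lemma prod_one_plus_r_ge_1 d : 1 <= prod_from (fun i => 1 + r i) 0 d.
Proof.
  destruct d as [|d]; [simpl; lra|].
  pose proof (prod_one_plus_ge_sum r d r_nonneg). pose proof (cond_pos_sum r d r_nonneg). lra.
Qed.

Lemma mu_head_pos d : 0 < mu d O.
Proof.
  rewrite (mu_head lam lam_nonneg lam_decr lam_head_pos d (mu d) (mu_enum d)).
  apply prod_from_pos. auto.
Qed.

Lemma mu_series_normalized d :
  infinite_sum (mu d) (mu d O * prod_from (fun i => 1 + r i) 0 d).
Proof.
  rewrite (mu_head lam lam_nonneg lam_decr lam_head_pos d (mu d) (mu_enum d)), <- prod_from_mult.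
  apply (mu_series lam lam_nonneg d (mu d) (mu_enum d)).
  intros j. apply series_normalized_iff; auto.
  replace ((lam j O * (1 + r j) - lam j O) / lam j O) with (r j); auto.
  field. apply Rgt_not_eq, lam_head_pos.
Qed.

Lemma complexity_ge_prod d eps n : is_complexity (mu d) eps n ->
  (1 - eps ^ 2) * prod_from (fun i => 1 + r i) 0 d <= INR n.
Proof.
  intros Hn. pose proof (mu_head_pos d). pose proof (prod_one_plus_r_ge_1 d).
  pose proof (complexity_lower_bound (mu d) _ (mu_decr _ _ _ (mu_enum d))
                (mu_series_normalized d) ltac:(nra) eps n Hn).
  apply Rmult_le_reg_r with (mu d O); nra.
Qed.

Lemma complexity_one_of_prod_le d eps : eps ^ 2 < 1 ->
  (1 - eps ^ 2) * prod_from (fun i => 1 + r i) 0 d <= 1 -> is_complexity (mu d) eps 1.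
Proof.
  intros Heps HQ. pose proof (mu_head_pos d). pose proof (prod_one_plus_r_ge_1 d).
  apply (complexity_one (mu d) _ (mu_series_normalized d)); nra.
Qed.

Lemma complexity_unbounded_of_divergent :
  cv_infty (fun J => sum_f_R0 r J) -> complexity_unbounded mu.
Proof.
  intros Hcv eps Heps M.
  assert (Hc : 0 < 1 - eps ^ 2) by nra.
  destruct (Hcv (INR M / (1 - eps ^ 2))) as [N HN].
  exists (S N). intros [|d] n Hd Hn; [lia|].
  pose proof (complexity_ge_prod _ _ _ Hn).
  pose proof (prod_one_plus_ge_sum r d r_nonneg).
  pose proof (HN d ltac:(lia)) as HM. apply Rlt_div_l in HM; [|lra].
  enough (Hlt : INR M < INR n) by (apply INR_lt in Hlt; lia).
  nra.
Qed.

Lemma divergent_of_complexity_unbounded :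
  complexity_unbounded mu -> cv_infty (fun J => sum_f_R0 r J).
Proof.
  intros Hi. apply NNPP. intros Hdiv.
  apply not_all_ex_not in Hdiv as [B HB].
  assert (HsB : forall J, sum_f_R0 r J <= B).
  { intros J. apply Rnot_lt_le. intros HJ. apply HB. exists J. intros n Hn.
    pose proof (growing_prop _ n J (sum_f_R0_growing r r_nonneg) Hn). lra. }
  set (c := / exp B).
  assert (Hc : 0 < c <= 1).
  { pose proof (exp_ineq1_le B). pose proof (cond_pos_sum r 0 r_nonneg). pose proof (HsB O).
    unfold c. split; [apply Rinv_0_lt_compat, exp_pos|].
    rewrite <- Rinv_1. apply Rinv_le_contravar; lra. }
  set (eps := 1 - c / 2).
  destruct (Hi eps ltac:(unfold eps; lra) 2%nat) as [D HD].
  enough (Hone : is_complexity (mu (S D)) eps 1)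
    by (pose proof (HD (S D) 1%nat ltac:(lia) Hone); lia).
  apply complexity_one_of_prod_le; [unfold eps; nra|].
  pose proof (prod_one_plus_le_exp r D r_nonneg).
  assert (exp (sum_f_R0 r D) <= exp B).
  { destruct (Rle_lt_or_eq_dec _ _ (HsB D)) as [Hlt|Heq].
    - left. now apply exp_increasing.
    - rewrite Heq. lra. }
  assert (c * exp B = 1) by (unfold c; field; apply Rgt_not_eq, exp_pos).
  assert (1 - eps ^ 2 <= c) by (unfold eps; nra).
  pose proof (prod_one_plus_r_ge_1 (S D)).
  nra.
Qed.

End Proposition.

Theorem proposition4
  (lam : nat -> nat -> R)
  (Hnonneg : forall j k, 0 <= lam j k)
  (Hdecr : forall j k, lam j (S k) <= lam j k)
  (Hpos : forall j, 0 < lam j 0%nat)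
  (Hsum : forall j, exists L, infinite_sum (lam j) L)
  (mu : nat -> nat -> R)
  (Hmu : forall d, is_tensor_eig_enum lam d (mu d)) :
  (forall eps, 0 < eps < 1 ->
     forall M : nat, exists D : nat, forall d n, (D <= d)%nat ->
       is_complexity (mu d) eps n -> (M <= n)%nat)
  <->
  (exists r : nat -> R,
     (forall j, infinite_sum (fun k => lam j (S k) / lam j 0%nat) (r j)) /\
     cv_infty (fun J => sum_f_R0 r J)).
Proof.
  split.
  - intros Hi.
    set (r := fun j => (Series (lam j) - lam j O) / lam j O).
    assert (Hr : forall j, infinite_sum (fun k => lam j (S k) / lam j O) (r j)).
    { intros j. destruct (Hsum j) as [L HL]. unfold r.
      rewrite (is_series_unique (lam j) L) by now apply is_series_Reals.
      apply (series_normalized_iff (lam j) L); auto. }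
    exists r. split; [exact Hr|].
    exact (divergent_of_complexity_unbounded lam Hnonneg Hdecr Hpos mu Hmu r Hr Hi).
  - intros (r & Hr & Hdiv).
    exact (complexity_unbounded_of_divergent lam Hnonneg Hdecr Hpos mu Hmu r Hr Hdiv).
Qed.
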